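(* Let $p$ and $q$ be primes with $\frac{3p-1}{2} < q < 2p-1$. Then $p$ and $q$ do not form a symmetric pair.
   Context: Two distinct primes $p$ and $q$ form a symmetric pair if $\gcd(p-1, q-1) = |p-q|$. *)

From mathcomp Require Import all_boot.

(* Two distinct primes p, q form a symmetric pair if gcd(p-1, q-1) = |p - q|.
   |p - q| on nat is (p - q) + (q - p) (truncated subtractions). *)
Definition symmetric_pair (p q : nat) : Prop :=
  [/\ prime p, prime q, p <> q & gcdn p.-1 q.-1 = (p - q) + (q - p)].

From mathcomp Require Import all_boot.
From mathcomp Require Import zify.

Set Implicit Arguments.
Unset Strict Implicit.

(* For q > p the gap q - p = gcd(p - 1, q - 1) divides p - 1, while the
   bounds on q place it strictly between (p - 1)/2 and p - 1, where no
   divisor of p - 1 lives. *)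

Lemma dvdn_lt_double_leq d n : d %| n -> d < n -> 2 * d <= n.
Proof.
case/dvdnP=> [[|[|k]] ->]; rewrite ?mul0n ?mul1n ?ltnn // => _.
by rewrite leq_mul2r orbC.
Qed.

Lemma symmetric_pair_gap_dvdn p q :
  p < q -> symmetric_pair p q -> q - p %| p.-1.
Proof.
move=> lt_pq [_ _ _ gcd_eq_gap].
by rewrite -[q - p]add0n -(eqP (ltnW lt_pq : p - q == 0)) -gcd_eq_gap dvdn_gcdl.
Qed.

Theorem lemma2 (p q : nat) :
  prime p -> prime q -> 3 * p - 1 < 2 * q -> q < 2 * p - 1 ->
  ~ symmetric_pair p q.
Proof.
move=> pr_p _ q_gt q_lt sym_pq.
have p_gt1 := prime_gt1 pr_p.
have lt_pq : p < q by lia.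
have gap_lt : q - p < p.-1 by lia.
have := dvdn_lt_double_leq (symmetric_pair_gap_dvdn lt_pq sym_pq) gap_lt.
lia.
Qed.
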